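(* For every finite multiset of formulas $\Gamma$ and every formula $\varphi$: the sequent $\Gamma\Rightarrow\varphi$ is derivable in $\mathbf{G3N}$ (resp. $\mathbf{G3NeF}$, $\mathbf{G3CoPC}$, $\mathbf{G3MPC}$) if and only if the equation $\bigwedge\Gamma\to\varphi\approx 1$ is valid in the variety of N-algebras (resp. NeF-algebras, CoPC-algebras, contrapositionally complemented lattices).
   Context: Formulas are generated from a countable set of propositional variables $p,q,\dots$ and the constant $\top$ by the grammar $\varphi::= p\mid\top\mid\varphi\wedge\varphi\mid\varphi\vee\varphi\mid\varphi\to\varphi\mid\neg\varphi$ (there is no constant $\bot$). $\varphi\leftrightarrow\psi$ abbreviates $(\varphi\to\psi)\wedge(\psi\to\varphi)$. A sequent is an expression $\Gamma\Rightarrow\varphi$ where $\Gamma$ is a finite multiset of formulas and $\varphi$ is a formula (the goal); $\Gamma,\Delta$ denotes multiset union and $\Gamma,\alpha$ denotes $\Gamma$ with one more occurrence of $\alpha$. Rules ($p$ a propositional variable): (ax) $\Gamma,p\Rightarrow p$ (no premises); ($\top$) $\Gamma\Rightarrow\top$ (no premises); ($\to$r) from $\Gamma,\alpha\Rightarrow\beta$ infer $\Gamma\Rightarrow\alpha\to\beta$; ($\to$l) from $\Gamma,\alpha\to\beta\Rightarrow\alpha$ and $\Gamma,\beta\Rightarrow\varphi$ infer $\Gamma,\alpha\to\beta\Rightarrow\varphi$; ($\wedge$r) from $\Gamma\Rightarrow\alpha$ and $\Gamma\Rightarrow\beta$ infer $\Gamma\Rightarrow\alpha\wedge\beta$; ($\wedge$l)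 from $\Gamma,\alpha,\beta\Rightarrow\varphi$ infer $\Gamma,\alpha\wedge\beta\Rightarrow\varphi$; ($\vee$r$_1$), ($\vee$r$_2$) from $\Gamma\Rightarrow\alpha$ (resp. $\Gamma\Rightarrow\beta$) infer $\Gamma\Rightarrow\alpha\vee\beta$; ($\vee$l) from $\Gamma,\alpha\Rightarrow\varphi$ and $\Gamma,\beta\Rightarrow\varphi$ infer $\Gamma,\alpha\vee\beta\Rightarrow\varphi$; (n) from $\Gamma,\neg\alpha,\beta\Rightarrow\alpha$ and $\Gamma,\neg\alpha,\alpha\Rightarrow\beta$ infer $\Gamma,\neg\alpha\Rightarrow\neg\beta$; (nef) from $\Gamma,\neg\alpha\Rightarrow\alpha$ infer $\Gamma,\neg\alpha\Rightarrow\neg\beta$; (copc) from $\Gamma,\neg\alpha,\beta\Rightarrow\alpha$ infer $\Gamma,\neg\alpha\Rightarrow\neg\beta$; (an) from $\Gamma,\alpha\Rightarrow\neg\alpha$ infer $\Gamma\Rightarrow\neg\alpha$. The rules (ax) through ($\vee$l) are the positive rules. The four systems are: $\mathbf{G3N}$ = positive rules + (n); $\mathbf{G3NeF}$ = positive rules + (n) + (nef); $\mathbf{G3CoPC}$ = positive rules + (copc); $\mathbf{G3MPC}$ = positive rules + (copc) + (an). None of them contains weakening, contraction or cut as a rule. A derivation is a finite tree of rule instances with leaves instances of (ax) or ($\top$); its height is the number of inference steps on a longest branch. A sequent is derivable if it has a derivation; a formula $\varphi$ is a theorem if $\Rightarrow\varphi$ (empty antecedent) is derivable. Algebraic semantics: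 a relatively pseudo-complemented lattice (Brouwerian algebra) is an algebra $\langle A,\wedge,\vee,\to,1\rangle$ that is a lattice with top element $1$ such that $c\le a\to b$ iff $c\wedge a\le b$ for all $a,b,c$. An N-algebra is an algebra $\langle A,\wedge,\vee,\to,1,\neg\rangle$ whose reduct $\langle A,\wedge,\vee,\to,1\rangle$ is a relatively pseudo-complemented lattice and whose unary operation satisfies $(p\leftrightarrow q)\to(\neg p\leftrightarrow\neg q)\approx 1$. NeF-algebras are N-algebras satisfying $(p\wedge\neg p)\to\neg q\approx1$; CoPC-algebras are N-algebras satisfying $(p\to q)\to(\neg q\to\neg p)\approx 1$; contrapositionally complemented lattices are CoPC-algebras satisfying moreover $(p\to\neg p)\to\neg p\approx 1$. Formulas are interpreted as terms, with $\top$ interpreted as $1$; $\bigwedge\Gamma$ is the conjunction of the formulas in $\Gamma$ (equal to $\top$ if $\Gamma$ is empty). An equation is valid in a variety if it holds under every assignment of the variables in every algebra of the variety. *)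

From Stdlib Require Import List Permutation.
Import ListNotations.

Inductive formula : Type :=
| Var : nat -> formula
| Top : formula
| And : formula -> formula -> formula
| Or  : formula -> formula -> formula
| Imp : formula -> formula -> formula
| Neg : formula -> formula.

Definition Iff (a b : formula) : formula := And (Imp a b) (Imp b a).

Fixpoint bigAnd (G : list formula) : formula :=
  match G with
  | [] => Top
  | [a] => a
  | a :: G' => And a (bigAnd G')
  end.

Inductive system : Type := G3N | G3NeF | G3CoPC | G3MPC.

Definition has_n (s : system) : bool :=
  match s with G3N | G3NeF => true | _ => false end.
Definition has_nef (s : system) : bool :=
  match s with G3NeF => true | _ => false end.
Definition has_copc (s : system) : bool :=
  match s with G3CoPC | G3MPC => true | _ => false end.
Definition has_an (s : system) : bool :=
  match s with G3MPC => true | _ => false end.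

(** Antecedents are finite multisets, represented by lists; a conclusion
    antecedent "Gamma, alpha" is any list that is a permutation of
    [alpha :: Gamma]. *)
Inductive deriv (s : system) : list formula -> formula -> Prop :=
| d_ax : forall G D p, Permutation D (Var p :: G) -> deriv s D (Var p)
| d_top : forall G, deriv s G Top
| d_impr : forall G a b, deriv s (a :: G) b -> deriv s G (Imp a b)
| d_impl : forall G D a b phi, Permutation D (Imp a b :: G) ->
    deriv s (Imp a b :: G) a -> deriv s (b :: G) phi -> deriv s D phi
| d_andr : forall G a b, deriv s G a -> deriv s G b -> deriv s G (And a b)
| d_andl : forall G D a b phi, Permutation D (And a b :: G) ->
    deriv s (a :: b :: G) phi -> deriv s D phi
| d_orr1 : forall G a b, deriv s G a -> deriv s G (Or a b)
| d_orr2 : forall G a b, deriv s G b -> deriv s G (Or a b)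
| d_orl : forall G D a b phi, Permutation D (Or a b :: G) ->
    deriv s (a :: G) phi -> deriv s (b :: G) phi -> deriv s D phi
| d_n : forall G D a b, has_n s = true -> Permutation D (Neg a :: G) ->
    deriv s (Neg a :: b :: G) a -> deriv s (Neg a :: a :: G) b ->
    deriv s D (Neg b)
| d_nef : forall G D a b, has_nef s = true -> Permutation D (Neg a :: G) ->
    deriv s (Neg a :: G) a -> deriv s D (Neg b)
| d_copc : forall G D a b, has_copc s = true -> Permutation D (Neg a :: G) ->
    deriv s (Neg a :: b :: G) a -> deriv s D (Neg b)
| d_an : forall G a, has_an s = true ->
    deriv s (a :: G) (Neg a) -> deriv s G (Neg a).

Record algebra := {
  carrier :> Type;
  ameet : carrier -> carrier -> carrier;
  ajoin : carrier -> carrier -> carrier;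
  aimp  : carrier -> carrier -> carrier;
  atop  : carrier;
  aneg  : carrier -> carrier
}.

Definition ale (A : algebra) (x y : A) : Prop := ameet A x y = x.

Definition is_rpc_lattice (A : algebra) : Prop :=
  (forall x y, ameet A x y = ameet A y x) /\
  (forall x y, ajoin A x y = ajoin A y x) /\
  (forall x y z, ameet A x (ameet A y z) = ameet A (ameet A x y) z) /\
  (forall x y z, ajoin A x (ajoin A y z) = ajoin A (ajoin A x y) z) /\
  (forall x y, ameet A x (ajoin A x y) = x) /\
  (forall x y, ajoin A x (ameet A x y) = x) /\
  (forall x, ale A x (atop A)) /\
  (forall a b c, ale A c (aimp A a b) <-> ale A (ameet A c a) b).

Definition aiff (A : algebra) (x y : A) : A :=
  ameet A (aimp A x y) (aimp A y x).

Definition is_N_algebra (A : algebra) : Prop :=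
  is_rpc_lattice A /\
  forall p q, aimp A (aiff A p q) (aiff A (aneg A p) (aneg A q)) = atop A.

Definition is_NeF_algebra (A : algebra) : Prop :=
  is_N_algebra A /\
  forall p q, aimp A (ameet A p (aneg A p)) (aneg A q) = atop A.

Definition is_CoPC_algebra (A : algebra) : Prop :=
  is_N_algebra A /\
  forall p q, aimp A (aimp A p q) (aimp A (aneg A q) (aneg A p)) = atop A.

Definition is_CC_lattice (A : algebra) : Prop :=
  is_CoPC_algebra A /\
  forall p, aimp A (aimp A p (aneg A p)) (aneg A p) = atop A.

Definition in_variety (s : system) (A : algebra) : Prop :=
  match s with
  | G3N => is_N_algebra A
  | G3NeF => is_NeF_algebra A
  | G3CoPC => is_CoPC_algebra A
  | G3MPC => is_CC_lattice A
  end.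

Fixpoint eval (A : algebra) (v : nat -> A) (f : formula) : A :=
  match f with
  | Var p => v p
  | Top => atop A
  | And a b => ameet A (eval A v a) (eval A v b)
  | Or a b => ajoin A (eval A v a) (eval A v b)
  | Imp a b => aimp A (eval A v a) (eval A v b)
  | Neg a => aneg A (eval A v a)
  end.

Definition valid_eq1 (s : system) (f : formula) : Prop :=
  forall (A : algebra), in_variety s A -> forall v : nat -> A, eval A v f = atop A.

From Stdlib Require Import List Permutation Lia Arith.
From Stdlib Require Import ProofIrrelevance FunctionalExtensionality
  PropExtensionality ClassicalEpsilon.
Import ListNotations.

(** Soundness is an induction on derivations: reading a sequent
    [Gamma => phi] as the inequality [/\Gamma <= phi], every rule preserves
    validity in any relatively pseudo-complemented lattice, the negation rules
    (n), (nef), (copc), (an) using exactly the defining equation of the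
    corresponding variety.

    Completeness goes through the Lindenbaum algebra: formulas modulo mutual
    derivability [a => b], [b => a] form an algebra of the right variety in
    which the canonical valuation validates exactly the derivable formulas.
    Making this relation transitive needs the admissibility of cut, which is
    the bulk of the file.  Cut is proved syntactically, by induction on the
    size of the cut formula and, inside, on the height of the derivation of
    its left premise; the height-preserving admissibility of exchange,
    weakening and of the inversion of the left rules for /\, \/, -> is
    established first, on a height-annotated copy of the calculus. *)

Lemma formula_eq_dec : forall x y : formula, {x = y} + {x <> y}.
Proof. decide equality; apply Nat.eq_dec. Qed.

(** [perm] proves a goal [Permutation l l'] from the permutation hypotheses in
    context, by comparing the number of occurrences of every formula. *)
Ltac perm :=
  solve [ apply (Permutation_count_occ formula_eq_dec);
    let z := fresh "z" in intro z;
    repeat match goal with H : Permutation _ _ |- _ =>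
      let Hz := fresh in
      pose proof (proj1 (Permutation_count_occ formula_eq_dec _ _) H z) as Hz;
      clear H end;
    repeat first
      [ rewrite count_occ_app in *
      | progress simpl count_occ in *
      | match goal with
        | |- context [formula_eq_dec ?x ?y] => destruct (formula_eq_dec x y)
        | H : context [formula_eq_dec ?x ?y] |- _ => destruct (formula_eq_dec x y)
        end ];
    first [lia | congruence] ].

Lemma perm_cons_cases : forall (x y : formula) l1 l2,
  Permutation (x :: l1) (y :: l2) ->
  (x = y /\ Permutation l1 l2) \/
  exists l3, Permutation l1 (y :: l3) /\ Permutation l2 (x :: l3).
Proof.
  intros x y l1 l2 H. destruct (formula_eq_dec x y) as [<-|Hxy].
  - left. split; [reflexivity | eapply Permutation_cons_inv; eauto].
  - right.
    assert (Hy : In y l1).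
    { destruct (Permutation_in y (Permutation_sym H) (in_eq y l2));
        [congruence | assumption]. }
    destruct (in_split _ _ Hy) as (la & lb & ->).
    exists (la ++ lb). split; [perm|].
    apply Permutation_cons_inv with y. perm.
Qed.

Section Structural.
Variable s : system.

Inductive dh : nat -> list formula -> formula -> Prop :=
| h_ax : forall n G D p, Permutation D (Var p :: G) -> dh n D (Var p)
| h_top : forall n G, dh n G Top
| h_impr : forall n G a b, dh n (a :: G) b -> dh (S n) G (Imp a b)
| h_impl : forall n G D a b phi, Permutation D (Imp a b :: G) ->
    dh n (Imp a b :: G) a -> dh n (b :: G) phi -> dh (S n) D phi
| h_andr : forall n G a b, dh n G a -> dh n G b -> dh (S n) G (And a b)
| h_andl : forall n G D a b phi, Permutation D (And a b :: G) ->
    dh n (a :: b :: G) phi -> dh (S n) D phi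
| h_orr1 : forall n G a b, dh n G a -> dh (S n) G (Or a b)
| h_orr2 : forall n G a b, dh n G b -> dh (S n) G (Or a b)
| h_orl : forall n G D a b phi, Permutation D (Or a b :: G) ->
    dh n (a :: G) phi -> dh n (b :: G) phi -> dh (S n) D phi
| h_n : forall n G D a b, has_n s = true -> Permutation D (Neg a :: G) ->
    dh n (Neg a :: b :: G) a -> dh n (Neg a :: a :: G) b ->
    dh (S n) D (Neg b)
| h_nef : forall n G D a b, has_nef s = true -> Permutation D (Neg a :: G) ->
    dh n (Neg a :: G) a -> dh (S n) D (Neg b)
| h_copc : forall n G D a b, has_copc s = true -> Permutation D (Neg a :: G) ->
    dh n (Neg a :: b :: G) a -> dh (S n) D (Neg b)
| h_an : forall n G a, has_an s = true ->
    dh n (a :: G) (Neg a) -> dh (S n) G (Neg a).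

Lemma dh_mono : forall n G phi, dh n G phi -> forall m, n <= m -> dh m G phi.
Proof.
  induction 1; intros m Hm;
    [ apply h_ax with G; assumption | apply h_top
    | destruct m as [|m]; [lia|]; econstructor; try eassumption;
      (apply IHdh || apply IHdh1 || apply IHdh2); lia .. ].
Qed.

Lemma deriv_dh : forall G phi, deriv s G phi -> exists n, dh n G phi.
Proof.
  induction 1;
    repeat match goal with H : exists _, _ |- _ => destruct H end;
    try (exists 0; econstructor; eauto; fail);
    try (exists (S x); econstructor; eauto; fail).
  all: exists (S (Nat.max x x0)); econstructor; eauto; eapply dh_mono; eauto; lia.
Qed.

Lemma dh_deriv : forall n G phi, dh n G phi -> deriv s G phi.
Proof.
  induction 1;
    [ eapply d_ax | eapply d_top | eapply d_impr | eapply d_impl | eapply d_andr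
    | eapply d_andl | eapply d_orr1 | eapply d_orr2 | eapply d_orl | eapply d_n
    | eapply d_nef | eapply d_copc | eapply d_an ]; eauto.
Qed.

Lemma dh_perm : forall n D phi, dh n D phi ->
  forall D', Permutation D D' -> dh n D' phi.
Proof.
  induction 1; intros D' HP.
  - apply h_ax with G. perm.
  - apply h_top.
  - apply h_impr, IHdh. perm.
  - apply h_impl with G a b; [perm | assumption | assumption].
  - apply h_andr; auto.
  - apply h_andl with G a b; [perm | assumption].
  - apply h_orr1; auto.
  - apply h_orr2; auto.
  - apply h_orl with G a b; [perm | assumption | assumption].
  - apply h_n with G a; [assumption | perm | assumption | assumption].
  - apply h_nef with G a; [assumption | perm | assumption].
  - apply h_copc with G a; [assumption | perm | assumption].
  - apply h_an; [assumption | apply IHdh; perm].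
Qed.

Lemma dh_weak : forall n D phi, dh n D phi -> forall x, dh n (x :: D) phi.
Proof.
  induction 1; intros x.
  - apply h_ax with (x :: G). perm.
  - apply h_top.
  - apply h_impr. apply dh_perm with (x :: a :: G); [apply IHdh | perm].
  - apply h_impl with (x :: G) a b; [perm | |].
    + apply dh_perm with (x :: Imp a b :: G); [apply IHdh1 | perm].
    + apply dh_perm with (x :: b :: G); [apply IHdh2 | perm].
  - apply h_andr; auto.
  - apply h_andl with (x :: G) a b; [perm |].
    apply dh_perm with (x :: a :: b :: G); [apply IHdh | perm].
  - apply h_orr1; auto.
  - apply h_orr2; auto.
  - apply h_orl with (x :: G) a b; [perm | |].
    + apply dh_perm with (x :: a :: G); [apply IHdh1 | perm].
    + apply dh_perm with (x :: b :: G); [apply IHdh2 | perm].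
  - apply h_n with (x :: G) a; [assumption | perm | |].
    + apply dh_perm with (x :: Neg a :: b :: G); [apply IHdh1 | perm].
    + apply dh_perm with (x :: Neg a :: a :: G); [apply IHdh2 | perm].
  - apply h_nef with (x :: G) a; [assumption | perm |].
    apply dh_perm with (x :: Neg a :: G); [apply IHdh | perm].
  - apply h_copc with (x :: G) a; [assumption | perm |].
    apply dh_perm with (x :: Neg a :: b :: G); [apply IHdh | perm].
  - apply h_an; [assumption |].
    apply dh_perm with (x :: a :: G); [apply IHdh | perm].
Qed.

(** Generic form: an occurrence of a compound, non-negated formula [X] in the
    antecedent can be replaced by the list [L], provided this is possible,
    with one extra step, when [X] is principal in the last rule. *)
Lemma dh_inv_left : forall (X : formula) (L : list formula),
  (forall p, X <> Var p) -> (forall a, X <> Neg a) ->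
  (forall a b n G phi, X = And a b ->
     dh n (a :: b :: G) phi -> dh (S n) (L ++ G) phi) ->
  (forall a b n G phi, X = Or a b ->
     dh n (a :: G) phi -> dh n (b :: G) phi -> dh (S n) (L ++ G) phi) ->
  (forall a b n G phi, X = Imp a b ->
     dh n (b :: G) phi -> dh (S n) (L ++ G) phi) ->
  forall n D phi, dh n D phi ->
  forall G, Permutation D (X :: G) -> dh n (L ++ G) phi.
Proof.
  intros X L HXvar HXneg Hand Hor Himp.
  induction 1; intros G0 HP.
  - assert (HP2 : Permutation (Var p :: G) (X :: G0)) by perm.
    apply perm_cons_cases in HP2 as [[E _] | (l3 & HL1 & HL2)];
      [exfalso; apply (HXvar p); auto |].
    apply h_ax with (L ++ l3). perm.
  - apply h_top.
  - apply h_impr. apply dh_perm with (L ++ a :: G0); [apply IHdh; perm | perm].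
  - assert (HP2 : Permutation (Imp a b :: G) (X :: G0)) by perm.
    apply perm_cons_cases in HP2 as [[E HE] | (l3 & HL1 & HL2)].
    + eapply Himp; [symmetry; exact E | apply dh_perm with (b :: G); [assumption | perm]].
    + apply h_impl with (L ++ l3) a b; [perm | |].
      * apply dh_perm with (L ++ Imp a b :: l3); [apply IHdh1; perm | perm].
      * apply dh_perm with (L ++ b :: l3); [apply IHdh2; perm | perm].
  - apply h_andr; auto.
  - assert (HP2 : Permutation (And a b :: G) (X :: G0)) by perm.
    apply perm_cons_cases in HP2 as [[E HE] | (l3 & HL1 & HL2)].
    + eapply Hand; [symmetry; exact E | apply dh_perm with (a :: b :: G); [assumption | perm]].
    + apply h_andl with (L ++ l3) a b; [perm |].
      apply dh_perm with (L ++ a :: b :: l3); [apply IHdh; perm | perm].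
  - apply h_orr1; auto.
  - apply h_orr2; auto.
  - assert (HP2 : Permutation (Or a b :: G) (X :: G0)) by perm.
    apply perm_cons_cases in HP2 as [[E HE] | (l3 & HL1 & HL2)].
    + eapply Hor; [symmetry; exact E
        | apply dh_perm with (a :: G); [assumption | perm]
        | apply dh_perm with (b :: G); [assumption | perm]].
    + apply h_orl with (L ++ l3) a b; [perm | |].
      * apply dh_perm with (L ++ a :: l3); [apply IHdh1; perm | perm].
      * apply dh_perm with (L ++ b :: l3); [apply IHdh2; perm | perm].
  - assert (HP2 : Permutation (Neg a :: G) (X :: G0)) by perm.
    apply perm_cons_cases in HP2 as [[E _] | (l3 & HL1 & HL2)];
      [exfalso; apply (HXneg a); auto |].
    apply h_n with (L ++ l3) a; [assumption | perm | |].
    + apply dh_perm with (L ++ Neg a :: b :: l3); [apply IHdh1; perm | perm].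
    + apply dh_perm with (L ++ Neg a :: a :: l3); [apply IHdh2; perm | perm].
  - assert (HP2 : Permutation (Neg a :: G) (X :: G0)) by perm.
    apply perm_cons_cases in HP2 as [[E _] | (l3 & HL1 & HL2)];
      [exfalso; apply (HXneg a); auto |].
    apply h_nef with (L ++ l3) a; [assumption | perm |].
    apply dh_perm with (L ++ Neg a :: l3); [apply IHdh; perm | perm].
  - assert (HP2 : Permutation (Neg a :: G) (X :: G0)) by perm.
    apply perm_cons_cases in HP2 as [[E _] | (l3 & HL1 & HL2)];
      [exfalso; apply (HXneg a); auto |].
    apply h_copc with (L ++ l3) a; [assumption | perm |].
    apply dh_perm with (L ++ Neg a :: b :: l3); [apply IHdh; perm | perm].
  - apply h_an; [assumption |].
    apply dh_perm with (L ++ a :: G0); [apply IHdh; perm | perm].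
Qed.

Lemma dh_inv_and : forall n a b G phi,
  dh n (And a b :: G) phi -> dh n (a :: b :: G) phi.
Proof.
  intros n a b G phi H.
  apply (dh_inv_left (And a b) [a; b]) with (n := n) (D := And a b :: G);
    try discriminate; auto.
  intros a' b' m G' phi' E H'. injection E as -> ->. apply dh_mono with m; auto.
Qed.

Lemma dh_inv_or1 : forall n a b G phi,
  dh n (Or a b :: G) phi -> dh n (a :: G) phi.
Proof.
  intros n a b G phi H.
  apply (dh_inv_left (Or a b) [a]) with (n := n) (D := Or a b :: G); try discriminate; auto.
  intros a' b' m G' phi' E H1 _. injection E as -> ->. apply dh_mono with m; auto.
Qed.

Lemma dh_inv_or2 : forall n a b G phi,
  dh n (Or a b :: G) phi -> dh n (b :: G) phi.
Proof.
  intros n a b G phi H.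
  apply (dh_inv_left (Or a b) [b]) with (n := n) (D := Or a b :: G); try discriminate; auto.
  intros a' b' m G' phi' E _ H2. injection E as -> ->. apply dh_mono with m; auto.
Qed.

(** Only the right premise of (->l) is invertible. *)
Lemma dh_inv_imp : forall n a b G phi,
  dh n (Imp a b :: G) phi -> dh n (b :: G) phi.
Proof.
  intros n a b G phi H.
  apply (dh_inv_left (Imp a b) [b]) with (n := n) (D := Imp a b :: G); try discriminate; auto.
  intros a' b' m G' phi' E H'. injection E as -> ->. apply dh_mono with m; auto.
Qed.

Lemma d_perm : forall D phi, deriv s D phi ->
  forall D', Permutation D D' -> deriv s D' phi.
Proof.
  intros D phi H D' HP. destruct (deriv_dh _ _ H) as [n Hn].
  eapply dh_deriv, dh_perm; eauto.
Qed.

Lemma d_weak : forall D phi x, deriv s D phi -> deriv s (x :: D) phi.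
Proof.
  intros D phi x H. destruct (deriv_dh _ _ H) as [n Hn].
  eapply dh_deriv, dh_weak; eauto.
Qed.

Lemma d_weak_app : forall L D phi, deriv s D phi -> deriv s (L ++ D) phi.
Proof. induction L; simpl; intros; auto using d_weak. Qed.

Lemma d_inv_and : forall a b G phi,
  deriv s (And a b :: G) phi -> deriv s (a :: b :: G) phi.
Proof.
  intros a b G phi H. destruct (deriv_dh _ _ H) as [n Hn].
  eapply dh_deriv, dh_inv_and; eauto.
Qed.

Lemma d_inv_or1 : forall a b G phi,
  deriv s (Or a b :: G) phi -> deriv s (a :: G) phi.
Proof.
  intros a b G phi H. destruct (deriv_dh _ _ H) as [n Hn].
  eapply dh_deriv, dh_inv_or1; eauto.
Qed.

Lemma d_inv_or2 : forall a b G phi,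
  deriv s (Or a b :: G) phi -> deriv s (b :: G) phi.
Proof.
  intros a b G phi H. destruct (deriv_dh _ _ H) as [n Hn].
  eapply dh_deriv, dh_inv_or2; eauto.
Qed.

Lemma d_inv_imp : forall a b G phi,
  deriv s (Imp a b :: G) phi -> deriv s (b :: G) phi.
Proof.
  intros a b G phi H. destruct (deriv_dh _ _ H) as [n Hn].
  eapply dh_deriv, dh_inv_imp; eauto.
Qed.

(** Every system has a right rule for negation usable with premise [a => a]:
    (n) in G3N, G3NeF and (copc) in G3CoPC, G3MPC. *)
Lemma neg_intro : forall G a b,
  deriv s (Neg a :: b :: G) a -> deriv s (Neg a :: a :: G) b ->
  deriv s (Neg a :: G) (Neg b).
Proof.
  intros G a b H1 H2. destruct (has_n s) eqn:En.
  - apply d_n with G a; auto.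
  - apply d_copc with G a; auto. destruct s; simpl in *; congruence.
Qed.

Lemma d_id : forall a G, deriv s (a :: G) a.
Proof.
  induction a; intros G.
  - apply d_ax with G. perm.
  - apply d_top.
  - apply d_andl with G a1 a2; [perm |]. apply d_andr; auto.
    apply d_perm with (a2 :: a1 :: G); auto. perm.
  - apply d_orl with G a1 a2; [perm | apply d_orr1 | apply d_orr2]; auto.
  - apply d_impr. apply d_impl with (a1 :: G) a1 a2; [perm | | auto].
    apply d_perm with (a1 :: Imp a1 a2 :: G); auto. perm.
  - apply neg_intro; apply d_perm with (a :: Neg a :: G); auto; perm.
Qed.

Lemma d_in : forall a G, In a G -> deriv s G a.
Proof.
  intros a G H. apply in_split in H as (l1 & l2 & ->).
  apply d_perm with (a :: l1 ++ l2); [apply d_id | perm].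
Qed.

End Structural.

(** * Admissibility of cut *)

Section Cut.
Variable s : system.

Definition cut_admissible (A : formula) : Prop :=
  forall G C, deriv s G A -> deriv s (A :: G) C -> deriv s G C.

Definition cut_admissible_at (n : nat) (A : formula) : Prop :=
  forall G, dh s n G A -> forall C, deriv s (A :: G) C -> deriv s G C.

(** A property of antecedents carrying what is known about the left premise
    while the cut is pushed up the right premise: it must survive the
    changes of antecedent along the way, i.e. exchange, weakening and the
    inversions of the left rules for /\, \/, ->. *)
Record stable_ctx (Q : list formula -> Prop) : Prop := {
  st_perm : forall G G', Permutation G G' -> Q G -> Q G';
  st_weak : forall G x, Q G -> Q (x :: G);
  st_and : forall G a b, Q (And a b :: G) -> Q (a :: b :: G);
  st_or1 : forall G a b, Q (Or a b :: G) -> Q (a :: G);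
  st_or2 : forall G a b, Q (Or a b :: G) -> Q (b :: G);
  st_imp : forall G a b, Q (Imp a b :: G) -> Q (b :: G)
}.

Lemma stable_deriv : forall L x, stable_ctx (fun G => deriv s (L ++ G) x).
Proof.
  intros L x; constructor; intros.
  - apply d_perm with (L ++ G); auto. perm.
  - apply d_perm with (x0 :: L ++ G); [apply d_weak; auto | perm].
  - apply d_perm with (a :: b :: L ++ G); [| perm]. apply d_inv_and.
    apply d_perm with (L ++ And a b :: G); auto; perm.
  - apply d_perm with (a :: L ++ G); [| perm]. apply d_inv_or1 with b.
    apply d_perm with (L ++ Or a b :: G); auto; perm.
  - apply d_perm with (b :: L ++ G); [| perm]. apply d_inv_or2 with a.
    apply d_perm with (L ++ Or a b :: G); auto; perm.
  - apply d_perm with (b :: L ++ G); [| perm]. apply d_inv_imp with a.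
    apply d_perm with (L ++ Imp a b :: G); auto; perm.
Qed.

Lemma stable_dh : forall n L x, stable_ctx (fun G => dh s n (L ++ G) x).
Proof.
  intros n L x; constructor; intros.
  - apply dh_perm with (L ++ G); auto. perm.
  - apply dh_perm with (x0 :: L ++ G); [apply dh_weak; auto | perm].
  - apply dh_perm with (a :: b :: L ++ G); [| perm]. apply dh_inv_and.
    apply dh_perm with (L ++ And a b :: G); auto; perm.
  - apply dh_perm with (a :: L ++ G); [| perm]. apply dh_inv_or1 with b.
    apply dh_perm with (L ++ Or a b :: G); auto; perm.
  - apply dh_perm with (b :: L ++ G); [| perm]. apply dh_inv_or2 with a.
    apply dh_perm with (L ++ Or a b :: G); auto; perm.
  - apply dh_perm with (b :: L ++ G); [| perm]. apply dh_inv_imp with a.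
    apply dh_perm with (L ++ Imp a b :: G); auto; perm.
Qed.

Lemma stable_conj : forall P P', stable_ctx P -> stable_ctx P' ->
  stable_ctx (fun G => P G /\ P' G).
Proof.
  intros P P' [] []; constructor; intros;
    repeat match goal with H : _ /\ _ |- _ => destruct H end; eauto.
Qed.

Lemma stable_neg : forall a P, stable_ctx P ->
  stable_ctx (fun G => exists G2, Permutation G (Neg a :: G2) /\ P G2).
Proof.
  intros a P [Pperm Pweak Pand Por1 Por2 Pimp]; constructor.
  - intros G G' HP (G2 & HG & HQ). exists G2; split; auto. perm.
  - intros G x (G2 & HG & HQ). exists (x :: G2); split; auto. perm.
  - intros G a' b (G2 & HG & HQ).
    apply perm_cons_cases in HG as [[E _] | (l3 & HL1 & HL2)]; [discriminate |].
    exists (a' :: b :: l3); split; [perm |]. apply Pand, Pperm with G2; auto.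
  - intros G a' b (G2 & HG & HQ).
    apply perm_cons_cases in HG as [[E _] | (l3 & HL1 & HL2)]; [discriminate |].
    exists (a' :: l3); split; [perm |]. apply Por1 with b, Pperm with G2; auto.
  - intros G a' b (G2 & HG & HQ).
    apply perm_cons_cases in HG as [[E _] | (l3 & HL1 & HL2)]; [discriminate |].
    exists (b :: l3); split; [perm |]. apply Por2 with a', Pperm with G2; auto.
  - intros G a' b (G2 & HG & HQ).
    apply perm_cons_cases in HG as [[E _] | (l3 & HL1 & HL2)]; [discriminate |].
    exists (b :: l3); split; [perm |]. apply Pimp with a', Pperm with G2; auto.
Qed.

(** Cut against the right premise: walk up the derivation of [A, G => C]
    as long as [A] is not principal; when it is principal in a left rule,
    the hypotheses below eliminate it, knowing only that the current
    antecedent satisfies the stable property [Q] of the left premise. *)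
Section CutRight.
Variable A : formula.
Variable Q : list formula -> Prop.
Hypothesis HQ : stable_ctx Q.
Hypothesis Hax : forall G p, Q G -> A = Var p -> deriv s G (Var p).
Hypothesis Hand : forall G a b C, Q G -> A = And a b ->
  deriv s (a :: b :: G) C -> deriv s G C.
Hypothesis Hor : forall G a b C, Q G -> A = Or a b ->
  deriv s (a :: G) C -> deriv s (b :: G) C -> deriv s G C.
Hypothesis Himp : forall G a b C, Q G -> A = Imp a b ->
  deriv s G a -> deriv s (b :: G) C -> deriv s G C.
Hypothesis Hn : forall G b c, has_n s = true -> Q G -> A = Neg b ->
  deriv s (c :: G) b -> deriv s (b :: G) c -> deriv s G (Neg c).
Hypothesis Hnef : forall G b c, has_nef s = true -> Q G -> A = Neg b ->
  deriv s G b -> deriv s G (Neg c).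
Hypothesis Hcopc : forall G b c, has_copc s = true -> Q G -> A = Neg b ->
  deriv s (c :: G) b -> deriv s G (Neg c).

Lemma cut_right_gen : forall D C, deriv s D C ->
  forall G, Permutation D (A :: G) -> Q G -> deriv s G C.
Proof.
  destruct HQ as [Qperm Qweak Qand Qor1 Qor2 Qimp].
  induction 1; intros G0 HP QG.
  - assert (HP2 : Permutation (Var p :: G) (A :: G0)) by perm.
    apply perm_cons_cases in HP2 as [[E _] | (l3 & HL1 & HL2)].
    + apply (Hax G0 p); auto.
    + apply d_ax with l3. perm.
  - apply d_top.
  - apply d_impr. apply IHderiv; [perm | auto].
  - assert (HP2 : Permutation (Imp a b :: G) (A :: G0)) by perm.
    apply perm_cons_cases in HP2 as [[E HE] | (l3 & HL1 & HL2)].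
    + apply (Himp G0 a b); auto.
      * apply IHderiv1; [perm | auto].
      * apply d_perm with (b :: G); [auto | perm].
    + assert (Q1 : Q (Imp a b :: l3)) by (apply Qperm with G0; auto).
      apply d_impl with l3 a b; [perm | |].
      * apply IHderiv1; [perm | auto].
      * apply IHderiv2; [perm | eauto].
  - apply d_andr; auto.
  - assert (HP2 : Permutation (And a b :: G) (A :: G0)) by perm.
    apply perm_cons_cases in HP2 as [[E HE] | (l3 & HL1 & HL2)].
    + apply (Hand G0 a b); auto.
      apply d_perm with (a :: b :: G); [auto | perm].
    + assert (Q1 : Q (And a b :: l3)) by (apply Qperm with G0; auto).
      apply d_andl with l3 a b; [perm |].
      apply IHderiv; [perm | eauto].
  - apply d_orr1; auto.
  - apply d_orr2; auto.
  - assert (HP2 : Permutation (Or a b :: G) (A :: G0)) by perm.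
    apply perm_cons_cases in HP2 as [[E HE] | (l3 & HL1 & HL2)].
    + apply (Hor G0 a b); auto.
      * apply d_perm with (a :: G); [auto | perm].
      * apply d_perm with (b :: G); [auto | perm].
    + assert (Q1 : Q (Or a b :: l3)) by (apply Qperm with G0; auto).
      apply d_orl with l3 a b; [perm | |].
      * apply IHderiv1; [perm | eauto].
      * apply IHderiv2; [perm | eauto].
  - assert (HP2 : Permutation (Neg a :: G) (A :: G0)) by perm.
    apply perm_cons_cases in HP2 as [[E HE] | (l3 & HL1 & HL2)].
    + apply (Hn G0 a); auto.
      * apply IHderiv1; [perm | auto].
      * apply IHderiv2; [perm | auto].
    + apply d_n with l3 a; [auto | perm | |].
      * apply IHderiv1; [perm |]. apply Qperm with (b :: G0); [perm | auto].
      * apply IHderiv2; [perm |]. apply Qperm with (a :: G0); [perm | auto].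
  - assert (HP2 : Permutation (Neg a :: G) (A :: G0)) by perm.
    apply perm_cons_cases in HP2 as [[E HE] | (l3 & HL1 & HL2)].
    + apply (Hnef G0 a); auto. apply IHderiv; [perm | auto].
    + apply d_nef with l3 a; [auto | perm |].
      apply IHderiv; [perm |]. apply Qperm with G0; [perm | auto].
  - assert (HP2 : Permutation (Neg a :: G) (A :: G0)) by perm.
    apply perm_cons_cases in HP2 as [[E HE] | (l3 & HL1 & HL2)].
    + apply (Hcopc G0 a); auto. apply IHderiv; [perm | auto].
    + apply d_copc with l3 a; [auto | perm |].
      apply IHderiv; [perm |]. apply Qperm with (b :: G0); [perm | auto].
  - apply d_an; auto. apply IHderiv; [perm | auto].
Qed.

Lemma cut_right : forall G C, Q G -> deriv s (A :: G) C -> deriv s G C.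
Proof. intros G C QG HC. eapply cut_right_gen; eauto. Qed.

End CutRight.

(** Each lemma eliminates the principal cut formula using cut on its
    immediate subformulas; [cut_right] carries it up to where it is principal
    in the right premise too. *)

(** Closes the hypotheses of [cut_right] for shapes of the cut formula other
    than the current one, and for rules the system does not have. *)
Ltac vacuous := intros; first [ discriminate | destruct s; discriminate ].

Lemma cut_var : forall p, cut_admissible (Var p).
Proof.
  intros p G C HG HC.
  apply (cut_right (Var p) (fun G => deriv s ([] ++ G) (Var p)));
    auto using stable_deriv; try vacuous.
  intros G1 p' HG1 E. injection E as <-. exact HG1.
Qed.

Lemma cut_top : cut_admissible Top.
Proof.
  intros G C HG HC.
  apply (cut_right Top (fun G => deriv s ([] ++ G) Top));
    auto using stable_deriv; vacuous.
Qed.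

Lemma cut_imp : forall a b, cut_admissible a -> cut_admissible b ->
  forall G C, deriv s (a :: G) b -> deriv s (Imp a b :: G) C -> deriv s G C.
Proof.
  intros a b Ha Hb G C HG HC.
  apply (cut_right (Imp a b) (fun G => deriv s ([a] ++ G) b));
    auto using stable_deriv; try vacuous.
  intros G1 a' b' C' HG1 E Ha' HC'. injection E as <- <-.
  apply Hb with (1 := Ha _ _ Ha' HG1). exact HC'.
Qed.

Lemma cut_and : forall a b, cut_admissible a -> cut_admissible b ->
  forall G C, deriv s G a -> deriv s G b -> deriv s (And a b :: G) C ->
  deriv s G C.
Proof.
  intros a b Ha Hb G C HGa HGb HC.
  apply (cut_right (And a b)
           (fun G => deriv s ([] ++ G) a /\ deriv s ([] ++ G) b));
    auto using stable_conj, stable_deriv; try vacuous.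
  intros G1 a' b' C' [HG1a HG1b] E HC'. injection E as <- <-.
  apply Ha with (1 := HG1a), Hb with (1 := d_weak _ _ _ a HG1b).
  apply d_perm with (a :: b :: G1); [exact HC' | perm].
Qed.

Lemma cut_or1 : forall a b, cut_admissible a ->
  forall G C, deriv s G a -> deriv s (Or a b :: G) C -> deriv s G C.
Proof.
  intros a b Ha G C HG HC.
  apply (cut_right (Or a b) (fun G => deriv s ([] ++ G) a));
    auto using stable_deriv; try vacuous.
  intros G1 a' b' C' HG1 E H1 _. injection E as <- <-. exact (Ha _ _ HG1 H1).
Qed.

Lemma cut_or2 : forall a b, cut_admissible b ->
  forall G C, deriv s G b -> deriv s (Or a b :: G) C -> deriv s G C.
Proof.
  intros a b Hb G C HG HC.
  apply (cut_right (Or a b) (fun G => deriv s ([] ++ G) b));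
    auto using stable_deriv; try vacuous.
  intros G1 a' b' C' HG1 E _ H2. injection E as <- <-. exact (Hb _ _ HG1 H2).
Qed.

(** Left premise by (n): [Neg b] is principal on the right by (n) or (nef). *)
Lemma cut_neg_n : forall a b, has_n s = true -> cut_admissible b ->
  forall G C, deriv s (Neg a :: b :: G) a -> deriv s (Neg a :: a :: G) b ->
  deriv s (Neg b :: Neg a :: G) C -> deriv s (Neg a :: G) C.
Proof.
  intros a b Hs Hb G C H1 H2 HC.
  apply (cut_right (Neg b) (fun G => exists G2, Permutation G (Neg a :: G2) /\
     (deriv s ([Neg a; b] ++ G2) a /\ deriv s ([Neg a; a] ++ G2) b)));
    auto using stable_neg, stable_conj, stable_deriv; try vacuous.
  - intros G1 b' c _ (G2 & HP & K1 & K2) E Hcb Hbc. injection E as <-.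
    apply d_n with G2 a; auto.
    + apply d_perm with (c :: G1); [| perm].
      apply Hb with (1 := Hcb).
      apply d_perm with (c :: Neg a :: b :: G2); [apply d_weak; auto | perm].
    + apply d_perm with (a :: G1); [| perm].
      apply Hb; [apply d_perm with (Neg a :: a :: G2); auto; perm |].
      apply d_perm with (a :: b :: G1); [apply d_weak; auto | perm].
  - intros G1 b' c Hnef (G2 & HP & K1 & K2) E Hb1. injection E as <-.
    apply d_nef with G2 a; auto.
    apply d_perm with G1; [| perm].
    apply Hb with (1 := Hb1).
    apply d_perm with (Neg a :: b :: G2); auto; perm.
  - exists G; split; [reflexivity | split; assumption].
Qed.

(** Left premise by (nef): the antecedent is already contradictory, so any
    negation is derivable by (nef) without using the right premise's rule. *)
Lemma cut_neg_nef : forall a b, has_nef s = true ->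
  forall G C, deriv s (Neg a :: G) a ->
  deriv s (Neg b :: Neg a :: G) C -> deriv s (Neg a :: G) C.
Proof.
  intros a b Hs G C H1 HC.
  apply (cut_right (Neg b) (fun G => exists G2, Permutation G (Neg a :: G2) /\
     deriv s ([Neg a] ++ G2) a));
    auto using stable_neg, stable_deriv; try vacuous.
  1-2: intros G1 b' c _ (G2 & HP & K) E; intros; apply d_nef with G2 a; auto.
  exists G; split; [reflexivity | assumption].
Qed.

Lemma cut_neg_copc : forall a b, has_copc s = true -> cut_admissible b ->
  forall G C, deriv s (Neg a :: b :: G) a ->
  deriv s (Neg b :: Neg a :: G) C -> deriv s (Neg a :: G) C.
Proof.
  intros a b Hs Hb G C H1 HC.
  apply (cut_right (Neg b) (fun G => exists G2, Permutation G (Neg a :: G2) /\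
     deriv s ([Neg a; b] ++ G2) a));
    auto using stable_neg, stable_deriv; try vacuous.
  - intros G1 b' c _ (G2 & HP & K) E Hcb. injection E as <-.
    apply d_copc with G2 a; auto.
    apply d_perm with (c :: G1); [| perm].
    apply Hb with (1 := Hcb).
    apply d_perm with (c :: Neg a :: b :: G2); [apply d_weak; auto | perm].
  - exists G; split; [reflexivity | assumption].
Qed.

(** Left premise by (an): the right premise's (copc) step on [Neg a] is
    replaced by (an), after a cut on [Neg a] with a left premise of the same
    height as the given one. *)
Lemma cut_neg_an : forall n a, has_an s = true -> cut_admissible a ->
  cut_admissible_at n (Neg a) ->
  forall G C, dh s n (a :: G) (Neg a) -> deriv s (Neg a :: G) C -> deriv s G C.
Proof.
  intros n a Hs Ha IHn G C H1 HC.
  apply (cut_right (Neg a) (fun G => dh s n ([a] ++ G) (Neg a)));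
    auto using stable_dh; try vacuous.
  intros G1 b' c Hc K E Hca. injection E as <-.
  apply d_an; auto.
  assert (Hneg : deriv s (a :: G1) (Neg c)).
  { apply IHn with (1 := K).
    apply d_copc with (a :: G1) a; auto.
    apply d_perm with (a :: Neg a :: c :: G1); [apply d_id | perm]. }
  apply Ha with (1 := Hca).
  apply d_perm with (c :: a :: G1); [apply d_weak; auto | perm].
Qed.

(** The cut moves up into the premises of that rule, whose heights are
    smaller; the right premise is adapted by inversion. *)

Lemma cut_impl_left : forall n A G D a b C, cut_admissible_at n A ->
  Permutation D (Imp a b :: G) -> dh s n (Imp a b :: G) a -> dh s n (b :: G) A ->
  deriv s (A :: D) C -> deriv s D C.
Proof.
  intros n A G D a b C IHn HP Ha Hb HC.
  apply d_impl with G a b; [exact HP | eapply dh_deriv; eauto |].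
  apply IHn with (1 := Hb).
  apply d_perm with (b :: A :: G); [| perm]. apply d_inv_imp with a.
  apply d_perm with (A :: D); auto. perm.
Qed.

Lemma cut_andl_left : forall n A G D a b C, cut_admissible_at n A ->
  Permutation D (And a b :: G) -> dh s n (a :: b :: G) A ->
  deriv s (A :: D) C -> deriv s D C.
Proof.
  intros n A G D a b C IHn HP Hab HC.
  apply d_andl with G a b; [exact HP |].
  apply IHn with (1 := Hab).
  apply d_perm with (a :: b :: A :: G); [| perm]. apply d_inv_and.
  apply d_perm with (A :: D); auto. perm.
Qed.

Lemma cut_orl_left : forall n A G D a b C, cut_admissible_at n A ->
  Permutation D (Or a b :: G) -> dh s n (a :: G) A -> dh s n (b :: G) A ->
  deriv s (A :: D) C -> deriv s D C.
Proof.
  intros n A G D a b C IHn HP Ha Hb HC.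
  assert (HC' : deriv s (Or a b :: A :: G) C).
  { apply d_perm with (A :: D); auto. perm. }
  apply d_orl with G a b; [exact HP | |].
  - apply IHn with (1 := Ha).
    apply d_perm with (a :: A :: G); [apply d_inv_or1 with b; auto | perm].
  - apply IHn with (1 := Hb).
    apply d_perm with (b :: A :: G); [apply d_inv_or2 with a; auto | perm].
Qed.

Fixpoint fsize (f : formula) : nat :=
  match f with
  | Var _ | Top => 1
  | And a b | Or a b | Imp a b => S (fsize a + fsize b)
  | Neg a => S (fsize a)
  end.

Lemma cut_at_height : forall A,
  (forall B, fsize B < fsize A -> cut_admissible B) ->
  forall n, cut_admissible_at n A.
Proof.
  intros A Hsmall n. induction n as [n IHn] using lt_wf_ind.
  intros G HA C HC.
  destruct HA; simpl in Hsmall.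
  - apply (cut_var p) with (2 := HC). apply d_ax with G. assumption.
  - exact (cut_top G C (d_top s G) HC).
  - apply (cut_imp a b); eauto using dh_deriv; apply Hsmall; lia.
  - apply (cut_impl_left n phi G D a b C (IHn n (Nat.lt_succ_diag_r n)));
      assumption.
  - apply (cut_and a b); eauto using dh_deriv; apply Hsmall; lia.
  - apply (cut_andl_left n phi G D a b C (IHn n (Nat.lt_succ_diag_r n)));
      assumption.
  - apply (cut_or1 a b); eauto using dh_deriv; apply Hsmall; lia.
  - apply (cut_or2 a b); eauto using dh_deriv; apply Hsmall; lia.
  - apply (cut_orl_left n phi G D a b C (IHn n (Nat.lt_succ_diag_r n)));
      assumption.
  - apply d_perm with (Neg a :: G); [| symmetry; assumption].
    apply (cut_neg_n a b);
      [assumption | apply Hsmall; lia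
      | eapply dh_deriv; eassumption | eapply dh_deriv; eassumption |].
    apply d_perm with (Neg b :: D); [exact HC | perm].
  - apply d_perm with (Neg a :: G); [| symmetry; assumption].
    apply (cut_neg_nef a b); [assumption | eapply dh_deriv; eassumption |].
    apply d_perm with (Neg b :: D); [exact HC | perm].
  - apply d_perm with (Neg a :: G); [| symmetry; assumption].
    apply (cut_neg_copc a b);
      [assumption | apply Hsmall; lia | eapply dh_deriv; eassumption |].
    apply d_perm with (Neg b :: D); [exact HC | perm].
  - apply (cut_neg_an n a); [assumption | apply Hsmall; lia
      | exact (IHn n (Nat.lt_succ_diag_r n)) | assumption | exact HC].
Qed.

Theorem cut : forall A, cut_admissible A.
Proof.
  intro A.
  induction A as [A IH]
    using (well_founded_induction (well_founded_ltof _ fsize)).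
  intros G C HG HC. destruct (deriv_dh s G A HG) as [n Hn].
  exact (cut_at_height A IH n G Hn C HC).
Qed.

End Cut.

Section Lattice.
Variable A : algebra.
Hypothesis HA : is_rpc_lattice A.
Local Notation m := (ameet A).
Local Notation j := (ajoin A).
Local Notation i := (aimp A).
Local Notation t := (atop A).
Local Notation le := (ale A).

Lemma meet_comm : forall x y, m x y = m y x. Proof. apply HA. Qed.
Lemma meet_assoc : forall x y z, m x (m y z) = m (m x y) z. Proof. apply HA. Qed.
Lemma join_comm : forall x y, j x y = j y x. Proof. apply HA. Qed.
Lemma join_assoc : forall x y z, j x (j y z) = j (j x y) z. Proof. apply HA. Qed.
Lemma le_top : forall x, le x t. Proof. apply HA. Qed.
Lemma residuation : forall a b c, le c (i a b) <-> le (m c a) b. Proof. apply HA. Qed.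

Lemma meet_idem : forall x, m x x = x.
Proof.
  intros x. destruct HA as (_ & _ & _ & _ & Habs1 & Habs2 & _).
  rewrite <- (Habs2 x x) at 2. apply Habs1.
Qed.

Lemma le_refl : forall x, le x x. Proof. exact meet_idem. Qed.

Lemma le_trans : forall x y z, le x y -> le y z -> le x z.
Proof. unfold ale; intros x y z H1 H2. rewrite <- H1, <- meet_assoc, H2. reflexivity. Qed.

Lemma le_antisym : forall x y, le x y -> le y x -> x = y.
Proof. unfold ale; intros x y H1 H2. rewrite <- H1, meet_comm. exact H2. Qed.

Lemma meet_lb1 : forall x y, le (m x y) x.
Proof.
  unfold ale; intros. rewrite (meet_comm x y), <- meet_assoc, meet_idem. reflexivity.
Qed.

Lemma meet_lb2 : forall x y, le (m x y) y.
Proof. unfold ale; intros. rewrite <- meet_assoc, meet_idem. reflexivity. Qed.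

Lemma meet_glb : forall x y z, le z x -> le z y -> le z (m x y).
Proof. unfold ale; intros x y z H1 H2. rewrite meet_assoc, H1, H2. reflexivity. Qed.

Lemma le_join : forall x y, le x y <-> j x y = y.
Proof.
  destruct HA as (_ & _ & _ & _ & Habs1 & Habs2 & _).
  unfold ale; split; intros H.
  - rewrite <- H, join_comm, meet_comm. apply Habs2.
  - rewrite <- H. apply Habs1.
Qed.

Lemma join_ub1 : forall x y, le x (j x y). Proof. apply HA. Qed.

Lemma join_ub2 : forall x y, le y (j x y).
Proof. intros. rewrite join_comm. apply join_ub1. Qed.

Lemma join_lub : forall x y z, le x z -> le y z -> le (j x y) z.
Proof.
  intros x y z H1 H2. apply le_join in H1, H2. apply le_join.
  rewrite <- join_assoc, H2, H1. reflexivity.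
Qed.

Lemma modus_ponens : forall c a b, le c (i a b) -> le c a -> le c b.
Proof.
  intros c a b H1 H2. apply le_trans with (m c a).
  - apply meet_glb; [apply le_refl | exact H2].
  - apply residuation; exact H1.
Qed.

Lemma imp_top_iff : forall x y, i x y = t <-> le x y.
Proof.
  intros x y. assert (Htop : forall z, m t z = z).
  { intros z. rewrite meet_comm. apply le_top. }
  split; intros H.
  - pose proof (le_refl t) as H0. rewrite <- H in H0 at 2.
    apply residuation in H0. rewrite Htop in H0. exact H0.
  - apply le_antisym; [apply le_top |]. apply residuation. rewrite Htop. exact H.
Qed.

(** [c] stands for the value of the antecedent, which contains [neg x]. *)

Lemma rule_n_sound :
  (forall p q, i (aiff A p q) (aiff A (aneg A p) (aneg A q)) = t) ->
  forall x y c, le c (aneg A x) -> le (m c y) x -> le (m c x) y ->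
  le c (aneg A y).
Proof.
  intros HN x y c Hc Hyx Hxy.
  assert (Hiff : le c (aiff A x y)).
  { apply meet_glb; apply residuation; assumption. }
  apply modus_ponens with (aneg A x); [| exact Hc].
  apply le_trans with (aiff A (aneg A x) (aneg A y)); [| apply meet_lb1].
  apply le_trans with (aiff A x y); [exact Hiff | apply imp_top_iff, HN].
Qed.

Lemma rule_nef_sound :
  (forall p q, i (m p (aneg A p)) (aneg A q) = t) ->
  forall x y c, le c (aneg A x) -> le c x -> le c (aneg A y).
Proof.
  intros HNeF x y c Hc Hx.
  apply le_trans with (m x (aneg A x)); [apply meet_glb; assumption |].
  apply imp_top_iff, HNeF.
Qed.

Lemma rule_copc_sound :
  (forall p q, i (i p q) (i (aneg A q) (aneg A p)) = t) ->
  forall x y c, le c (aneg A x) -> le (m c y) x -> le c (aneg A y).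
Proof.
  intros HCoPC x y c Hc Hyx.
  apply modus_ponens with (aneg A x); [| exact Hc].
  apply le_trans with (i y x); [apply residuation; exact Hyx |].
  apply imp_top_iff, HCoPC.
Qed.

Lemma rule_an_sound :
  (forall p, i (i p (aneg A p)) (aneg A p) = t) ->
  forall x c, le (m c x) (aneg A x) -> le c (aneg A x).
Proof.
  intros HCC x c Hx.
  apply le_trans with (i x (aneg A x)); [apply residuation; exact Hx |].
  apply imp_top_iff, HCC.
Qed.

End Lattice.

(** * Soundness *)

Section Soundness.
Variable s : system.
Variable A : algebra.
Hypothesis HV : in_variety s A.
Variable v : nat -> A.
Local Notation m := (ameet A).
Local Notation le := (ale A).
Local Notation ev := (eval A v).

Lemma variety_rpc : is_rpc_lattice A.
Proof.
  destruct s; simpl in HV;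
    unfold is_CC_lattice, is_CoPC_algebra, is_NeF_algebra, is_N_algebra in HV; tauto.
Qed.

Fixpoint ctx_value (G : list formula) : A :=
  match G with [] => atop A | f :: G' => m (ev f) (ctx_value G') end.

Lemma ctx_value_perm : forall G G', Permutation G G' -> ctx_value G = ctx_value G'.
Proof.
  pose proof variety_rpc as R.
  induction 1; simpl; try congruence.
  rewrite !(meet_assoc A R), (meet_comm A R (ev y)). reflexivity.
Qed.

Lemma ctx_value_bigAnd : forall G, ev (bigAnd G) = ctx_value G.
Proof.
  pose proof variety_rpc as R.
  induction G as [|a [|b G'] IH]; simpl in *; auto.
  - symmetry. apply (le_top A R).
  - rewrite IH. reflexivity.
Qed.

Theorem soundness : forall G phi, deriv s G phi -> le (ctx_value G) (ev phi).
Proof.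
  pose proof variety_rpc as R.
  induction 1; try rewrite (ctx_value_perm _ _ H);
    try rewrite (ctx_value_perm _ _ H0); simpl in *.
  - apply (meet_lb1 A R).
  - apply (le_top A R).
  - apply (residuation A R). rewrite (meet_comm A R). exact IHderiv.
  - apply (le_trans A R) with (m (ev b) (ctx_value G)); [| exact IHderiv2].
    apply (meet_glb A R); [| apply (meet_lb2 A R)].
    apply (modus_ponens A R) with (ev a); [apply (meet_lb1 A R) | exact IHderiv1].
  - apply (meet_glb A R); assumption.
  - rewrite <- (meet_assoc A R). exact IHderiv.
  - apply (le_trans A R) with (ev a); [exact IHderiv | apply (join_ub1 A R)].
  - apply (le_trans A R) with (ev b); [exact IHderiv | apply (join_ub2 A R)].
  - apply (residuation A R), (join_lub A R); apply (residuation A R); assumption.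
  - assert (HN : is_N_algebra A)
      by (destruct s; simpl in *; try discriminate; unfold is_NeF_algebra in HV; tauto).
    apply (rule_n_sound A R (proj2 HN) (ev a)); [apply (meet_lb1 A R) | |];
      rewrite <- (meet_assoc A R), (meet_comm A R (ctx_value G)); assumption.
  - assert (HNeF : is_NeF_algebra A) by (destruct s; simpl in *; try discriminate; auto).
    apply (rule_nef_sound A R (proj2 HNeF) (ev a)); [apply (meet_lb1 A R) | exact IHderiv].
  - assert (HCoPC : is_CoPC_algebra A)
      by (destruct s; simpl in *; try discriminate; unfold is_CC_lattice in HV; tauto).
    apply (rule_copc_sound A R (proj2 HCoPC) (ev a)); [apply (meet_lb1 A R) |].
    rewrite <- (meet_assoc A R), (meet_comm A R (ctx_value G)). exact IHderiv.
  - assert (HCC : is_CC_lattice A) by (destruct s; simpl in *; try discriminate; auto).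
    apply (rule_an_sound A R (proj2 HCC)). rewrite (meet_comm A R). exact IHderiv.
Qed.

End Soundness.

(** The class of [x] is the predicate [R x]; a representative of a class is
    obtained by choice. *)

Section Quotient.
Variable T : Type.
Variable R : T -> T -> Prop.
Hypothesis R_refl : forall x, R x x.
Hypothesis R_sym : forall x y, R x y -> R y x.
Hypothesis R_trans : forall x y z, R x y -> R y z -> R x z.

Definition quot : Type := { P : T -> Prop | exists x, P = R x }.

Definition qclass (x : T) : quot := exist _ (R x) (ex_intro _ x eq_refl).

Definition qrepr (q : quot) : T :=
  proj1_sig (constructive_indefinite_description _ (proj2_sig q)).

Lemma qclass_qrepr : forall q, qclass (qrepr q) = q.
Proof.
  intros [P HP]. unfold qrepr, qclass; simpl.
  destruct (constructive_indefinite_description _ HP) as [x ->]; simpl.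
  f_equal. apply proof_irrelevance.
Qed.

Lemma qclass_surj : forall q, exists x, q = qclass x.
Proof. intros q. exists (qrepr q). symmetry. apply qclass_qrepr. Qed.

Lemma qclass_eq : forall x y, R x y -> qclass x = qclass y.
Proof.
  intros x y Hxy. unfold qclass.
  assert (E : R x = R y).
  { apply functional_extensionality; intro z. apply propositional_extensionality.
    split; intro; eauto. }
  generalize (ex_intro (fun x' => R x = R x') x eq_refl).
  generalize (ex_intro (fun y' => R y = R y') y eq_refl).
  rewrite E. intros. f_equal. apply proof_irrelevance.
Qed.

Lemma qclass_inj : forall x y, qclass x = qclass y -> R x y.
Proof.
  intros x y H. apply (f_equal (@proj1_sig _ _)) in H; simpl in H.
  rewrite H. apply R_refl.
Qed.

Lemma qrepr_qclass : forall x, R (qrepr (qclass x)) x.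
Proof. intros x. apply qclass_inj, qclass_qrepr. Qed.

End Quotient.

(** * The Lindenbaum algebra *)

Section Lindenbaum.
Variable s : system.

Definition ded (a b : formula) : Prop := deriv s [a] b.

Definition interderivable (a b : formula) : Prop := ded a b /\ ded b a.

Lemma ded_lift : forall a b G, ded a b -> deriv s (a :: G) b.
Proof. intros. apply d_perm with (G ++ [a]); [apply d_weak_app; auto | perm]. Qed.

Lemma ded_refl : forall a, ded a a. Proof. intros; apply d_id. Qed.

Lemma ded_trans : forall a b c, ded a b -> ded b c -> ded a c.
Proof. intros a b c Hab Hbc. apply cut with b; auto. apply ded_lift; auto. Qed.

Lemma interderivable_refl : forall a, interderivable a a.
Proof. split; apply ded_refl. Qed.

Lemma interderivable_sym : forall a b, interderivable a b -> interderivable b a.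
Proof. unfold interderivable; tauto. Qed.

Lemma interderivable_trans : forall a b c,
  interderivable a b -> interderivable b c -> interderivable a c.
Proof. intros a b c [] []; split; eapply ded_trans; eauto. Qed.

Lemma and_left : forall a b G C,
  deriv s (a :: b :: G) C -> deriv s (And a b :: G) C.
Proof. intros. apply d_andl with G a b; auto. Qed.

Lemma or_left : forall a b G C,
  deriv s (a :: G) C -> deriv s (b :: G) C -> deriv s (Or a b :: G) C.
Proof. intros. apply d_orl with G a b; auto. Qed.

Lemma imp_left_in : forall a b G C, In (Imp a b) G ->
  deriv s G a -> deriv s (b :: G) C -> deriv s G C.
Proof.
  intros a b G C HI Ha Hb. apply cut with b; auto.
  apply in_split in HI as (l1 & l2 & ->).
  apply d_impl with (l1 ++ l2) a b; [perm | | apply d_id].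
  apply d_perm with (l1 ++ Imp a b :: l2); auto. perm.
Qed.

Ltac by_hyp := apply d_in; simpl; tauto.

Lemma interderivable_and : forall a b a' b', interderivable a a' ->
  interderivable b b' -> interderivable (And a b) (And a' b').
Proof.
  intros a b a' b' [H1 H2] [H3 H4]; split; apply and_left; apply d_andr;
    solve [ apply ded_lift; auto
          | apply d_perm with [b; a]; [apply ded_lift; auto | perm]
          | apply d_perm with [b'; a']; [apply ded_lift; auto | perm] ].
Qed.

Lemma interderivable_or : forall a b a' b', interderivable a a' ->
  interderivable b b' -> interderivable (Or a b) (Or a' b').
Proof.
  intros a b a' b' [H1 H2] [H3 H4]; split; apply or_left;
    solve [ apply d_orr1, ded_lift; auto | apply d_orr2, ded_lift; auto ].
Qed.

Lemma interderivable_imp : forall a b a' b', interderivable a a' ->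
  interderivable b b' -> interderivable (Imp a b) (Imp a' b').
Proof.
  intros a b a' b' [H1 H2] [H3 H4]; split; apply d_impr.
  - apply imp_left_in with a b; [simpl; tauto | apply ded_lift | apply ded_lift]; auto.
  - apply imp_left_in with a' b'; [simpl; tauto | apply ded_lift | apply ded_lift]; auto.
Qed.

Lemma interderivable_neg : forall a a', interderivable a a' ->
  interderivable (Neg a) (Neg a').
Proof.
  intros a a' [H1 H2]; split; apply neg_intro.
  - apply d_perm with [a'; Neg a]; [apply ded_lift; auto | perm].
  - apply d_perm with [a; Neg a]; [apply ded_lift; auto | perm].
  - apply d_perm with [a; Neg a']; [apply ded_lift; auto | perm].
  - apply d_perm with [a'; Neg a']; [apply ded_lift; auto | perm].
Qed.

Local Notation cls := (qclass formula interderivable).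
Local Notation rep := (qrepr formula interderivable).

Definition lind : algebra := {|
  carrier := quot formula interderivable;
  ameet := fun x y => cls (And (rep x) (rep y));
  ajoin := fun x y => cls (Or (rep x) (rep y));
  aimp := fun x y => cls (Imp (rep x) (rep y));
  atop := cls Top;
  aneg := fun x => cls (Neg (rep x)) |}.

Lemma class_eq : forall a b, interderivable a b -> cls a = cls b.
Proof.
  apply qclass_eq; [exact interderivable_sym | exact interderivable_trans].
Qed.

Lemma class_inj : forall a b, cls a = cls b -> interderivable a b.
Proof. apply qclass_inj, interderivable_refl. Qed.

Lemma repr_class : forall a, interderivable (rep (cls a)) a.
Proof. apply qrepr_qclass, interderivable_refl. Qed.

Lemma meet_class : forall a b, ameet lind (cls a) (cls b) = cls (And a b).
Proof. intros; apply class_eq, interderivable_and; apply repr_class. Qed.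

Lemma join_class : forall a b, ajoin lind (cls a) (cls b) = cls (Or a b).
Proof. intros; apply class_eq, interderivable_or; apply repr_class. Qed.

Lemma imp_class : forall a b, aimp lind (cls a) (cls b) = cls (Imp a b).
Proof. intros; apply class_eq, interderivable_imp; apply repr_class. Qed.

Lemma neg_class : forall a, aneg lind (cls a) = cls (Neg a).
Proof. intros; apply class_eq, interderivable_neg; apply repr_class. Qed.

Lemma eval_canonical : forall f, eval lind (fun p => cls (Var p)) f = cls f.
Proof.
  induction f; simpl eval.
  - reflexivity.
  - reflexivity.
  - rewrite IHf1, IHf2. apply meet_class.
  - rewrite IHf1, IHf2. apply join_class.
  - rewrite IHf1, IHf2. apply imp_class.
  - rewrite IHf. apply neg_class.
Qed.

Lemma le_class : forall a b, ale lind (cls a) (cls b) <-> ded a b.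
Proof.
  intros a b. unfold ale. rewrite meet_class. split; intro H.
  - apply class_inj in H as [_ H]. apply ded_trans with (And a b); auto.
    apply and_left. by_hyp.
  - apply class_eq. split.
    + apply and_left. by_hyp.
    + apply d_andr; [by_hyp | exact H].
Qed.

Lemma theorem_class_top : forall f, deriv s [] f -> cls f = atop lind.
Proof.
  intros f H. apply class_eq. split; [apply d_top | apply d_weak; exact H].
Qed.

(** Rewrite every element of the algebra as a class, and the operations on
    classes as classes of compound formulas. *)
Ltac as_classes :=
  repeat match goal with x : carrier lind |- _ =>
    let f := fresh "f" in destruct (qclass_surj _ _ x) as [f ->] end;
  repeat first
    [ rewrite meet_class | rewrite join_class | rewrite imp_class | rewrite neg_class ].

Lemma lind_rpc : is_rpc_lattice lind.
Proof.
  repeat split; intros; as_classes.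
  - apply class_eq; split; apply and_left; apply d_andr; by_hyp.
  - apply class_eq; split; apply or_left;
      solve [apply d_orr1; by_hyp | apply d_orr2; by_hyp].
  - apply class_eq; split.
    + apply and_left. apply d_perm with [And f0 f; f1]; [| perm]. apply and_left.
      apply d_andr; [apply d_andr |]; by_hyp.
    + apply and_left, and_left. apply d_andr; [| apply d_andr]; by_hyp.
  - apply class_eq; split.
    + apply or_left; [apply d_orr1, d_orr1; by_hyp |].
      apply or_left; [apply d_orr1, d_orr2; by_hyp | apply d_orr2; by_hyp].
    + apply or_left; [| apply d_orr2, d_orr2; by_hyp].
      apply or_left; [apply d_orr1; by_hyp | apply d_orr2, d_orr1; by_hyp].
  - apply class_eq; split; [apply and_left; by_hyp |].
    apply d_andr; [by_hyp | apply d_orr1; by_hyp].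
  - apply class_eq; split; [apply or_left; [by_hyp | apply and_left; by_hyp] |].
    apply d_orr1; by_hyp.
  - apply le_class, d_top.
  - rewrite imp_class in H. apply le_class. apply le_class in H.
    apply and_left. apply cut with (Imp f1 f0); [apply ded_lift; auto |].
    apply imp_left_in with f1 f0; [simpl; tauto | by_hyp | by_hyp].
  - rewrite meet_class in H. apply le_class. apply le_class in H. apply d_impr.
    apply cut with (And f f1); [apply d_andr; by_hyp |].
    apply ded_lift; auto.
Qed.

(** [a <-> b, neg a => neg b], the derivation behind the N-equation. *)
Lemma neg_congruence : forall a b, deriv s [Imp a b; Imp b a; Neg a] (Neg b).
Proof.
  intros. apply d_perm with [Neg a; Imp a b; Imp b a]; [| perm]. apply neg_intro.
  - apply imp_left_in with b a; [simpl; tauto | by_hyp | by_hyp].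
  - apply imp_left_in with a b; [simpl; tauto | by_hyp | by_hyp].
Qed.

Lemma lind_N : is_N_algebra lind.
Proof.
  split; [exact lind_rpc |]. intros p q.
  destruct (qclass_surj _ _ p) as [a ->], (qclass_surj _ _ q) as [b ->].
  unfold aiff; as_classes.
  apply theorem_class_top, d_impr, and_left. apply d_andr; apply d_impr.
  - apply d_perm with [Imp a b; Imp b a; Neg a]; [apply neg_congruence | perm].
  - apply d_perm with [Imp b a; Imp a b; Neg b]; [apply neg_congruence | perm].
Qed.

Lemma lind_NeF : has_nef s = true -> is_NeF_algebra lind.
Proof.
  intros Hs. split; [exact lind_N |]. intros p q.
  destruct (qclass_surj _ _ p) as [a ->], (qclass_surj _ _ q) as [b ->].
  as_classes. apply theorem_class_top, d_impr, and_left.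
  apply d_perm with [Neg a; a]; [| perm].
  apply d_nef with [a] a; auto. by_hyp.
Qed.

Lemma lind_CoPC : has_copc s = true -> is_CoPC_algebra lind.
Proof.
  intros Hs. split; [exact lind_N |]. intros p q.
  destruct (qclass_surj _ _ p) as [a ->], (qclass_surj _ _ q) as [b ->].
  as_classes. apply theorem_class_top, d_impr, d_impr.
  apply d_copc with [Imp a b] b; auto.
  apply imp_left_in with a b; [simpl; tauto | by_hyp | by_hyp].
Qed.

Lemma lind_CC : has_copc s = true -> has_an s = true -> is_CC_lattice lind.
Proof.
  intros Hc Ha. split; [apply lind_CoPC; auto |]. intros p.
  destruct (qclass_surj _ _ p) as [a ->].
  as_classes. apply theorem_class_top, d_impr, d_an; auto.
  apply imp_left_in with a (Neg a); [simpl; tauto | by_hyp | by_hyp].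
Qed.

End Lindenbaum.

Lemma lind_in_variety : forall s, in_variety s (lind s).
Proof.
  intros []; simpl.
  - apply lind_N.
  - apply lind_NeF; reflexivity.
  - apply lind_CoPC; reflexivity.
  - apply lind_CC; reflexivity.
Qed.

(** A formula valid in the variety is a theorem: it is valid in the
    Lindenbaum algebra under the canonical valuation. *)
Theorem completeness : forall s f, valid_eq1 s f -> deriv s [] f.
Proof.
  intros s f H.
  specialize (H (lind s) (lind_in_variety s)
                (fun p => qclass formula (interderivable s) (Var p))).
  rewrite eval_canonical in H. apply class_inj in H as [_ H].
  apply cut with Top; [apply d_top | exact H].
Qed.

Lemma bigAnd_right : forall s G, deriv s G (bigAnd G).
Proof.
  intros s G. induction G as [|a [|b G'] IH].
  - apply d_top.
  - apply d_id.
  - apply d_andr; [apply d_id | apply d_weak, IH].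
Qed.

Lemma deriv_of_theorem : forall s G phi,
  deriv s [] (Imp (bigAnd G) phi) -> deriv s G phi.
Proof.
  intros s G phi H.
  apply cut with (bigAnd G); [apply bigAnd_right |].
  apply cut with (Imp (bigAnd G) phi).
  - rewrite <- (app_nil_r (bigAnd G :: G)). apply d_weak_app, H.
  - apply imp_left_in with (bigAnd G) phi; [left; reflexivity | | apply d_id].
    apply d_in; simpl; tauto.
Qed.

Lemma valid_of_deriv : forall s G phi,
  deriv s G phi -> valid_eq1 s (Imp (bigAnd G) phi).
Proof.
  intros s G phi H A HV v. simpl eval.
  rewrite (ctx_value_bigAnd s A HV v).
  apply (imp_top_iff A (variety_rpc s A HV)), (soundness s A HV v), H.
Qed.

Theorem theorem3p3 : forall (s : system) (G : list formula) (phi : formula),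
  deriv s G phi <-> valid_eq1 s (Imp (bigAnd G) phi).
Proof.
  intros s G phi; split.
  - apply valid_of_deriv.
  - intros H. apply deriv_of_theorem, completeness, H.
Qed.
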